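(* Let $\Sigma,\Gamma$ be finite alphabets, $k>0$, $\tau$ a tier on $\Sigma\times\Gamma^*$, and $f:\Sigma^*\to\Gamma^*$ a function that is $k$-TSSL on tier $\tau$. Then the SFST $T_f$ constructed from $f$ as described in the context is onward.
   Context: Strings: $\lambda$ is the empty string; $\rtimes$ is a boundary symbol not in any alphabet. For $m\ge0$, $\mathrm{suff}^m(x)$ is the string of the last $m$ symbols of $\rtimes^mx$. $\mathrm{lcp}(A)$ is the longest common prefix of a set of strings $A$. SFST: $\langle Q,\Sigma,\Gamma,q_0,\to,\sigma\rangle$ with states $Q$, start $q_0$, transition function $\to:Q\times\Sigma\to Q\times\Gamma^*$, final output $\sigma:Q\to\Gamma^*$; $q\xrightarrow{a:y}r$ means $\to(q,a)=\langle r,y\rangle$. The SFST is onward if for every state $q\ne q_0$, $\mathrm{lcp}(\{y\mid\exists a\in\Sigma\,\exists r.\ q\xrightarrow{a:y}r\}\cup\{\sigma(q)\})=\lambda$. For $f:\Sigma^*\to\Gamma^*$: $f^{\gets}(x):=\mathrm{lcp}(\{f(xy)\mid y\in\Sigma^*\})$; $f^{\to}_x$ is defined by $f(xy)=f^{\gets}(x)f^{\to}_x(y)$. A tier on a (possibly infinite) alphabet $A$ is a homomorphism $\tau:A^*\to A^*$ with $\tau(a)\in\{a,\lambda\}$ for each $a$; extended to $\rtimes$ by $\tau(\rtimes)=\rtimes$. Actions: $\mathbb{A}_f:=\{\langle x,y\rangle\in\Sigma\times\Gamma^*\mid\exists z.\ f^{\gets}(zx)=f^{\gets}(z)y\}$,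 written $x:y$. Run: if $|x|\le1$, $f^{\Leftarrow}(x):=x:f^{\gets}(x)$; if $x=yz$, $|y|\ge1$, $|z|=1$, $f^{\Leftarrow}(x):=f^{\Leftarrow}(y)(z:w)$ where $f^{\gets}(x)=f^{\gets}(y)w$. $f$ is $k$-TSSL on $\tau$ if $\mathrm{suff}^{k-1}(\tau(f^{\Leftarrow}(x)))=\mathrm{suff}^{k-1}(\tau(f^{\Leftarrow}(y)))$ implies $f^{\to}_x=f^{\to}_y$ for all $x,y\in\Sigma^*$. Construction of $T_f$: $Q:=(\{\rtimes\}\cup\mathbb{A}_f)^{k-1}$, $q_0:=\rtimes^{k-1}$. For $x\in\Sigma$, $\to(q_0,x):=\langle \mathrm{suff}^{k-1}(\tau(x:f^{\gets}(x))),f^{\gets}(x)\rangle$. For $q\in Q\setminus\{q_0\}$ and $w\in\Sigma$: take $x\in\Sigma^*$ with $\mathrm{suff}^{k-1}(\tau(f^{\Leftarrow}(x)))=q$ and let $w:y\in\mathbb{A}_f$ be such that $f^{\gets}(xw)=f^{\gets}(x)y$; set $\to(q,w):=\langle\mathrm{suff}^{k-1}(\tau(q(w:y))),y\rangle$ (by the TSSL property this does not depend on the choice of $x$). Final outputs: $\sigma(q_0):=f(\lambda)$, and for $q\ne q_0$, $\sigma(q):=f^{\to}_x(\lambda)$ where $\mathrm{suff}^{k-1}(\tau(f^{\Leftarrow}(x)))=q$. *)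

From mathcomp Require Import all_boot.
From Stdlib Require Import ClassicalEpsilon.

Set Implicit Arguments.
Unset Strict Implicit.
Unset Printing Implicit Defensive.

Section TSSL.
Variables (Sigma Gamma : finType).

Notation word := (seq Sigma).
Notation oword := (seq Gamma).

Definition is_lcp (A : oword -> Prop) (p : oword) : Prop :=
  (forall s, A s -> prefix p s) /\
  (forall p', (forall s, A s -> prefix p' s) -> prefix p' p).

(* lcp(A): the (unique) longest common prefix; [::] if none exists
   (it always exists for nonempty A). *)
Definition lcp (A : oword -> Prop) : oword :=
  epsilon (inhabits [::]) (is_lcp A).

Variable f : word -> oword.

Definition fleft (x : word) : oword := lcp (fun s => exists y, s = f (x ++ y)).

(* f^{->}_x(y), determined by f(xy) = f^{<-}(x) f^{->}_x(y) *)
Definition fright (x : word) (y : word) : oword :=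
  drop (size (fleft x)) (f (x ++ y)).

Definition action := (Sigma * oword)%type.

Definition actions_f (a : action) : Prop :=
  exists z, fleft (z ++ [:: a.1]) = fleft z ++ a.2.

(* The run f^{<=}(x).  runf pre s produces the actions for the letters of s,
   given that the already-read prefix is pre.  The first letter a gets
   the action a:f^{<-}(a); each later letter z after prefix y gets z:w with
   f^{<-}(yz) = f^{<-}(y) w. *)
Fixpoint runf (pre : word) (s : word) : seq action :=
  match s with
  | [::] => [::]
  | a :: s' =>
      (a, if pre is [::] then fleft [:: a]
          else drop (size (fleft pre)) (fleft (rcons pre a)))
      :: runf (rcons pre a) s'
  end.
Definition run (x : word) : seq action := runf [::] x.

Definition is_tier (tau : seq action -> seq action) : Prop :=
  (forall s t, tau (s ++ t) = tau s ++ tau t) /\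
  (forall a, tau [:: a] = [:: a] \/ tau [:: a] = [::]).

(* Strings over {rtimes} + actions: None is the boundary symbol rtimes *)
Definition bword := seq (option action).

Definition suffb (m : nat) (s : bword) : bword :=
  let t := nseq m None ++ s in drop (size t - m) t.
(* suff^m(x) = last m symbols of rtimes^m x *)
Definition suff (m : nat) (s : seq action) : bword := suffb m (map Some s).

Definition tau_ext (tau : seq action -> seq action) (s : bword) : bword :=
  flatten (map (fun o => match o with
                         | None => [:: None]
                         | Some a => map Some (tau [:: a]) end) s).

Definition is_TSSL (k : nat) (tau : seq action -> seq action) : Prop :=
  forall x y : word,
    suff k.-1 (tau (run x)) = suff k.-1 (tau (run y)) ->
    forall z, fright x z = fright y z.

Variables (k : nat) (tau : seq action -> seq action).

Definition state := bword.
Definition q0 : state := nseq k.-1 None.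

Definition realizes (q : state) (x : word) : Prop :=
  suff k.-1 (tau (run x)) = q.

Definition pick_x (q : state) : word := epsilon (inhabits [::]) (realizes q).

Definition Tf_trans (q : state) (w : Sigma) : state * oword :=
  if q == q0 then (suff k.-1 (tau [:: (w, fleft [:: w])]), fleft [:: w])
  else
    let x := pick_x q in
    let y := drop (size (fleft x)) (fleft (x ++ [:: w])) in
    (suffb k.-1 (tau_ext tau (rcons q (Some (w, y)))), y).

Definition Tf_final (q : state) : oword :=
  if q == q0 then f [::] else fright (pick_x q) [::].

(* The states of T_f at which the construction is defined:
   q0 and the states realized by some input string. *)
Definition Tf_state (q : state) : Prop := q = q0 \/ exists x, realizes q x.

End TSSL.

Definition onward (Sigma Gamma : finType) (S : eqType) (Q : S -> Prop) (s0 : S)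
  (trans : S -> Sigma -> S * seq Gamma) (final : S -> seq Gamma) : Prop :=
  forall q, Q q -> q <> s0 ->
    lcp (fun y => (exists (a : Sigma) (r : S), trans q a = (r, y)) \/ y = final q)
    = [::].

(** At a state [q <> q0] every output of [T_f] is computed from one
    fixed input [x] realizing [q]: the transition on [w] emits the residual of
    [f^<-(x w)] after [f^<-(x)], and the final output is [f^->_x(λ)].  If all of
    these began with a common symbol [c], then [f^<-(x) c] would be a prefix of
    every [f(x y)], contradicting the maximality of the longest common prefix
    [f^<-(x)].  The TSSL property only serves to make [T_f] independent of the
    choice of [x]. *)

From mathcomp Require Import all_boot.
From Stdlib Require Import ClassicalEpsilon Classical.

Set Implicit Arguments.
Unset Strict Implicit.
Unset Printing Implicit Defensive.

Lemma ex_bounded_max (P : nat -> Prop) (b : nat) :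
  P 0 -> exists n, [/\ n <= b, P n & forall m, m <= b -> P m -> m <= n].
Proof.
move=> P0; elim: b => [|b [n [le_nb Pn max_n]]].
  by exists 0; split=> // m; rewrite leqn0 => /eqP->.
case: (classic (P b.+1)) => [Pb1 | notPb1].
  by exists b.+1; split.
exists n; split=> [||m]; first exact: leqW; first by [].
by rewrite leq_eqVlt => /orP[/eqP-> // | lt_mb] /(max_n _ lt_mb).
Qed.

Section LongestCommonPrefix.
Variables (G : finType) (A : seq G -> Prop).

Lemma is_lcp_exists (s0 : seq G) : A s0 -> exists p, is_lcp A p.
Proof.
move=> As0.
pose common n := forall s, A s -> prefix (take n s0) s.
have common0 : common 0 by move=> s _; rewrite take0 prefix0s.
have [n [_ common_n max_n]] := ex_bounded_max (size s0) common0.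
exists (take n s0); split=> // p common_p.
have /prefixP [t s0E] := common_p _ As0.
have take_p : take (size p) s0 = p by rewrite s0E take_size_cat.
have le_ps : size p <= size s0 by rewrite s0E size_cat leq_addr.
have le_pn : size p <= n by apply: max_n => // s As; rewrite take_p; apply: common_p.
by rewrite prefixE take_takel // take_p.
Qed.

Lemma lcp_spec (s0 : seq G) : A s0 -> is_lcp A (lcp A).
Proof. by move=> As0; apply: epsilon_spec; apply: is_lcp_exists As0. Qed.

Lemma lcp_eq_nil (s0 : seq G) :
  A s0 -> (forall c, ~ (forall s, A s -> prefix [:: c] s)) -> lcp A = [::].
Proof.
move=> As0 no_common; have [common_lcp _] := lcp_spec As0.
case E: (lcp A) => [// | c p]; exfalso; apply: (no_common c) => s /common_lcp.
by rewrite E -cat1s; apply: catl_prefix.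
Qed.

End LongestCommonPrefix.

Section LeftOutput.
Variables (Sigma Gamma : finType) (f : seq Sigma -> seq Gamma).

Lemma fleft_spec (x : seq Sigma) :
  is_lcp (fun s => exists y, s = f (x ++ y)) (fleft f x).
Proof. by apply: (lcp_spec (s0 := f (x ++ [::]))); exists [::]. Qed.

Lemma fleft_prefix (x y : seq Sigma) : prefix (fleft f x) (f (x ++ y)).
Proof. by have [common _] := fleft_spec x; apply: common; exists y. Qed.

Lemma fleft_max (x : seq Sigma) (p : seq Gamma) :
  (forall y, prefix p (f (x ++ y))) -> prefix p (fleft f x).
Proof. by move=> common; have [_] := fleft_spec x; apply=> s [y ->]. Qed.

Lemma fleft_prefix_cat (x y : seq Sigma) : prefix (fleft f x) (fleft f (x ++ y)).
Proof. by apply: fleft_max => z; rewrite -catA; apply: fleft_prefix. Qed.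

Lemma fleft_cat (x y : seq Sigma) :
  fleft f (x ++ y) = fleft f x ++ drop (size (fleft f x)) (fleft f (x ++ y)).
Proof. by have /prefixP [t ->] := fleft_prefix_cat x y; rewrite drop_size_cat. Qed.

Lemma fright_nil (x : seq Sigma) : f x = fleft f x ++ fright f x [::].
Proof.
have /prefixP [t] := fleft_prefix x [::].
by rewrite /fright !cats0 => ->; rewrite drop_size_cat.
Qed.

Lemma fleft_residuals_no_common (x : seq Sigma) (c : Gamma) :
  prefix [:: c] (fright f x [::]) ->
  (forall w, prefix [:: c] (drop (size (fleft f x)) (fleft f (x ++ [:: w])))) ->
  False.
Proof.
move=> c_final c_trans.
have c_all : forall y, prefix (fleft f x ++ [:: c]) (f (x ++ y)).
  case=> [|w y].
    by rewrite cats0 fright_nil prefix_catr // eqxx c_final.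
  apply: (@prefix_trans _ (fleft f (x ++ [:: w]))); last first.
    by rewrite -[w :: y]cat1s catA; apply: fleft_prefix.
  by rewrite [X in prefix _ X]fleft_cat prefix_catr // eqxx c_trans.
have /prefixP [t /(congr1 size)] := fleft_max c_all.
by rewrite !size_cat /= -addnA -[LHS]addn0 => /eqP; rewrite eqn_add2l.
Qed.

End LeftOutput.

Theorem corollary28 (Sigma Gamma : finType) (k : nat)
  (tau : seq (action Sigma Gamma) -> seq (action Sigma Gamma))
  (f : seq Sigma -> seq Gamma) :
  0 < k ->
  is_tier tau ->
  is_TSSL f k tau ->
  onward (Tf_state f k tau) (q0 Sigma Gamma k)
         (Tf_trans f k tau) (Tf_final f k tau).
Proof.
move=> _ _ _ q _ q_ne_q0.
have /negbTE q_neq_q0 : q != q0 Sigma Gamma k by apply/eqP.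
set x := pick_x f k tau q.
apply: (lcp_eq_nil (s0 := Tf_final f k tau q)); first by right.
move=> c c_all; apply: (fleft_residuals_no_common (x := x) (c := c)).
  by apply: c_all; right; rewrite /Tf_final q_neq_q0.
by move=> w; apply: c_all; left; exists w; eexists; rewrite /Tf_trans q_neq_q0.
Qed.
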